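(* Let $m>n>0$ be relatively prime integers and $(r,s)\in\mathbb{Z}^2$. Then $(r,s)=\beta(m,\,m-n)$ if and only if $(s,\,r-s)=\beta(2m-n,\,m)$.
   Context: For relatively prime integers $a>b>0$, $\beta(a,b)$ denotes the Bézout coefficients given by the Euclidean algorithm: with $a=q_1b+r_1$, $b=q_2r_1+r_2$, $\dots$, $r_{k-2}=q_kr_{k-1}+r_k$, $r_{k-1}=1$, $r_k=0$ ($r_{-1}=a$, $r_0=b$), write $\begin{pmatrix}a\\ b\end{pmatrix}=M\begin{pmatrix}1\\0\end{pmatrix}$ with $M=\prod_{i=1}^k\begin{pmatrix}q_i&1\\1&0\end{pmatrix}$; then $\beta(a,b)$ is the first row of $M^{-1}$, and $\beta(a,b)=(r,s)$ satisfies $ra+sb=1$. *)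

From mathcomp Require Import all_boot all_order all_algebra.
Set Implicit Arguments. Unset Strict Implicit. Unset Printing Implicit Defensive.
Import GRing.Theory Num.Theory.
Local Open Scope ring_scope.

(* Quotients q_1, ..., q_k of the Euclidean algorithm on (a, b):
   a = q_1 b + r_1, b = q_2 r_1 + r_2, ..., stopping when the remainder is 0.
   The fuel b.+1 suffices since the second argument strictly decreases. *)
Fixpoint euclid_quots_fuel (fuel a b : nat) : seq nat :=
  match fuel with
  | 0 => [::]
  | f.+1 => if b == 0%N then [::] else (a %/ b)%N :: euclid_quots_fuel f b (a %% b)
  end.

Definition euclid_quots (a b : nat) : seq nat := euclid_quots_fuel b.+1 a b.

Definition qmx (q : nat) : 'M[int]_2 :=
  \matrix_(i < 2, j < 2)
    if (i == 0 :> nat) then (if (j == 0 :> nat) then q%:Z else 1)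
    else (if (j == 0 :> nat) then 1 else 0).

Definition euclid_mx (a b : nat) : 'M[int]_2 :=
  \prod_(q <- euclid_quots a b) qmx q.

Definition beta (a b : nat) : int * int :=
  let Mi := invmx (euclid_mx a b) in (Mi ord0 ord0, Mi ord0 ord_max).

From mathcomp Require Import all_boot all_order all_algebra.
From mathcomp Require Import zify.
Import GRing.Theory.
Local Open Scope ring_scope.

(* One Euclidean step, a = q b + r, factors the matrix as [[q, 1], [1, 0]] M'
   with M' the matrix of (b, r); inverting, the first row (r', s') of M'^-1 is
   multiplied by [[0, 1], [1, -q]], so beta a b = (s', r' - q s').  The first
   step of the algorithm on (2m - n, m) has quotient 1 and remainder m - n. *)

Lemma euclid_quots_fuel_enough (f g a b : nat) : (b < f)%N -> (b < g)%N ->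
  euclid_quots_fuel f a b = euclid_quots_fuel g a b.
Proof.
elim: f g a b => [|f IH] [|g] a b //= lt_bf lt_bg.
case: eqP => // /eqP b_neq0.
have lt_mod : (a %% b < b)%N by rewrite ltn_pmod ?lt0n.
congr (_ :: _); apply: IH; lia.
Qed.

Lemma euclid_quots_cons (a b : nat) : (0 < b)%N ->
  euclid_quots a b = (a %/ b)%N :: euclid_quots b (a %% b).
Proof.
move=> b_gt0; rewrite {1}/euclid_quots /= (negbTE (lt0n_neq0 b_gt0)).
have lt_mod : (a %% b < b)%N by rewrite ltn_pmod.
by congr (_ :: _); exact: euclid_quots_fuel_enough.
Qed.

Definition qmx_inv (q : nat) : 'M[int]_2 :=
  \matrix_(i < 2, j < 2)
    if (i == 0 :> nat) then (if (j == 0 :> nat) then 0 else 1)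
    else (if (j == 0 :> nat) then 1 else - q%:Z).

Lemma qmx_invK (q : nat) : qmx_inv q *m qmx q = 1%:M.
Proof.
apply/matrixP => i j; rewrite !mxE big_ord_recl big_ord1 !mxE /=.
case: i => [[|[|i]] lt_i2] //; case: j => [[|[|j]] lt_j2] //=; rewrite ?mxE /=; lia.
Qed.

Lemma qmx_unit (q : nat) : qmx q \in unitmx.
Proof. by case: (mulmx1_unit (qmx_invK q)). Qed.

Lemma invmx_qmx (q : nat) : invmx (qmx q) = qmx_inv q.
Proof. by rewrite -[invmx _]mul1mx -(qmx_invK q) -mulmxA mulmxV ?qmx_unit ?mulmx1. Qed.

Lemma euclid_mx_unit (a b : nat) : euclid_mx a b \in unitmx.
Proof.
apply: (big_ind (fun M : 'M[int]_2 => M \in unitmx)) => [|M N uM uN|q _].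
- exact: unitmx1.
- by rewrite -mulmxE unitmx_mul uM uN.
- exact: qmx_unit.
Qed.

Lemma invmx_euclid_mx_cons (a b : nat) : (0 < b)%N ->
  invmx (euclid_mx a b) = invmx (euclid_mx b (a %% b)) *m qmx_inv (a %/ b).
Proof.
move=> b_gt0; rewrite /euclid_mx euclid_quots_cons // big_cons.
rewrite -/(euclid_mx b (a %% b)) -invmx_qmx mulmxE.
exact: (invrM (qmx_unit _) (euclid_mx_unit _ _)).
Qed.

Lemma beta_cons (a b : nat) : (0 < b)%N ->
  beta a b = ((beta b (a %% b)).2,
              (beta b (a %% b)).1 - (a %/ b)%N%:Z * (beta b (a %% b)).2).
Proof.
move=> b_gt0; rewrite /beta invmx_euclid_mx_cons //.
rewrite !mxE !big_ord_recl !big_ord0 !mxE /=.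
have -> : lift ord0 ord0 = ord_max :> 'I_2 by apply/val_inj.
by rewrite mulr0 !mulr1 !addr0 add0r mulrN mulrC.
Qed.

Theorem lemma2p3 (m n : nat) (r s : int) :
  (0 < n)%N -> (n < m)%N -> coprime m n ->
  ((r, s) = beta m (m - n)) <-> ((s, r - s) = beta (2 * m - n) m).
Proof.
move=> n_gt0 lt_nm _.
have m_gt0 : (0 < m)%N by lia.
have quot1 : ((2 * m - n) %/ m = 1)%N.
  by apply/eqP; rewrite eqn_leq -ltnS ltn_divLR ?leq_divRL //; lia.
have rem : ((2 * m - n) %% m = m - n)%N.
  by rewrite (_ : 2 * m - n = m - n + m)%N ?modnDr ?modn_small //; lia.
rewrite [beta (2 * m - n)%N m]beta_cons // quot1 rem mul1r.
case: (beta m (m - n)) => r0 s0 /=; split=> [[-> ->] // | [-> /eqP]].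
by rewrite subr_eq subrK => /eqP ->.
Qed.
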